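(* Let $\gamma\in\mathbb N\setminus\{1\}$, $b_1<b_2<\dots<b_\gamma$ real numbers, and $a\in C(\mathbb R,\mathbb R)$ with $a(x)=(\max\{x,0\})^\gamma$ for all $x\in\mathbb R$. Then (i) $(\mathcal R_a(\mathbf I_\gamma))(x)=x^\gamma$ for all $x\in\mathbb R$; (ii) there exist unique $c_0,\dots,c_\gamma\in\mathbb R$ such that for all $k\in\{0,1,\dots,\gamma\}$, $\mathbb 1_{\{\gamma\}}(k)c_0+\sum_{i=1}^\gamma c_i(b_i)^k=\mathbb 1_{\{\gamma-1\}}(k)\gamma^{-1}$; (iii) with these constants $\Psi=\mathbf A_{1,c_0}\bullet\bigl(\bigoplus_{i=1}^\gamma(c_i\circledast(\mathbf I_\gamma\bullet\mathbf A_{1,b_i}))\bigr)\in\mathbf N$ is well defined; (iv) $\mathcal D(\Psi)=(1,2\gamma,1)$; (v) $\mathcal R_a(\Psi)\in C(\mathbb R,\mathbb R)$; and (vi) $(\mathcal R_a(\Psi))(x)=x$ for all $x\in\mathbb R$.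
   Context: Artificial neural networks (ANNs). Let $\mathbb N=\{1,2,\dots\}$ and $\mathbf N=\bigcup_{L\in\mathbb N}\bigcup_{l_0,\dots,l_L\in\mathbb N}\prod_{k=1}^L(\mathbb R^{l_k\times l_{k-1}}\times\mathbb R^{l_k})$. For $\Phi=((W_1,B_1),\dots,(W_L,B_L))$ in the $(l_0,\dots,l_L)$ component, $\mathcal L(\Phi)=L$, $\mathcal I(\Phi)=l_0$, $\mathcal O(\Phi)=l_L$, $\mathcal D(\Phi)=(l_0,\dots,l_L)$. For $a\in C(\mathbb R,\mathbb R)$ the realization is $(\mathcal R_a(\Phi))(x_0)=W_Lx_{L-1}+B_L$ with $x_k=\mathfrak M_{a,l_k}(W_kx_{k-1}+B_k)$, $k=1,\dots,L-1$, $\mathfrak M_{a,m}$ applying $a$ componentwise. $\operatorname I_n$ is the identity matrix; $\mathbf A_{W,B}=((W,B))$ (for reals $w,b$, $\mathbf A_{w,b}$ has $1\times1$ weight $w$ and bias $b$). Composition: for $\Phi_1=((W_1,B_1),\dots,(W_L,B_L))$, $\Phi_2=((\mathscr W_1,\mathscr B_1),\dots,(\mathscr W_{\mathfrak L},\mathscr B_{\mathfrak L}))$ with $\mathcal I(\Phi_1)=\mathcal O(\Phi_2)$, $\Phi_1\bullet\Phi_2=((\mathscr W_1,\mathscr B_1),\dots,(\mathscr W_{\mathfrak L-1},\mathscr B_{\mathfrak L-1}),(W_1\mathscr W_{\mathfrak L},W_1\mathscr B_{\mathfrak L}+B_1),(W_2,B_2),\dots,(W_L,B_L))$. $\lambda\circledast\Phi=\mathbf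 A_{\lambda\operatorname I_{\mathcal O(\Phi)},0}\bullet\Phi$. $\mathbf P_n(\Phi_1,\dots,\Phi_n)$ (equal lengths) has $k$-th layer $(\operatorname{diag}(W_{1,k},\dots,W_{n,k}),(B_{1,k},\dots,B_{n,k}))$. $\mathfrak S_{m,n}=\mathbf A_{(\operatorname I_m\cdots\operatorname I_m),0}$, $\mathfrak T_{m,n}=\mathbf A_{(\operatorname I_m\cdots\operatorname I_m)^\top,0}$ ($n$ blocks). For $\Phi_u,\dots,\Phi_v$ with equal $\mathcal L,\mathcal I,\mathcal O$: $\bigoplus_{k=u}^v\Phi_k=\mathfrak S_{\mathcal O(\Phi_u),v-u+1}\bullet([\mathbf P_{v-u+1}(\Phi_u,\dots,\Phi_v)]\bullet\mathfrak T_{\mathcal I(\Phi_u),v-u+1})$. For $\gamma\in\mathbb N_0$, $\mathbf I_\gamma=\bigl(\bigl(\begin{pmatrix}1\\-1\end{pmatrix},\begin{pmatrix}0\\0\end{pmatrix}\bigr),\bigl(\begin{pmatrix}1&(-1)^\gamma\end{pmatrix},0\bigr)\bigr)\in(\mathbb R^{2\times1}\times\mathbb R^2)\times(\mathbb R^{1\times2}\times\mathbb R^1)$. *)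

From HB Require Import structures.
From mathcomp Require Import all_boot all_order all_algebra.
From mathcomp Require Import all_classical all_reals all_analysis.
Set Implicit Arguments. Unset Strict Implicit. Unset Printing Implicit Defensive.
Import Order.TTheory GRing.Theory Num.Theory numFieldNormedType.Exports.

(* A matrix W in R^{m x n} is represented by its dimensions (m,n) together with
   an entry function nat -> nat -> R, of which only the entries (i,j) with
   i < m, j < n are ever used; likewise vectors are nat -> R. *)

Section ANN.
Variable R : realType.
Local Open Scope ring_scope.

Record layer := Layer { lrows : nat; lcols : nat;
                        lW : nat -> nat -> R; lB : nat -> R }.

Definition ann := seq layer.

Definition dflt_layer : layer := Layer 0 0 (fun _ _ => 0) (fun _ => 0).

Definition isANN (Phi : ann) : bool :=
  match Phi with
  | [::] => false
  | l :: Phi' => (0 < lcols l)%N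
                 && path (fun l1 l2 => lcols l2 == lrows l1) l Phi'
                 && all (fun l => (0 < lrows l)%N) Phi
  end.

Definition lenA (Phi : ann) : nat := size Phi.
Definition inA (Phi : ann) : nat := lcols (head dflt_layer Phi).
Definition outA (Phi : ann) : nat := lrows (last dflt_layer Phi).
Definition dimsA (Phi : ann) : seq nat := inA Phi :: map lrows Phi.

Definition affine (l : layer) (x : nat -> R) : nat -> R :=
  fun i => \sum_(j < lcols l) lW l i j * x j + lB l i.

(* realization R_a(Phi), acting on vectors (only the first I(Phi) input
   entries are used, only the first O(Phi) output entries are meaningful) *)
Fixpoint realize (a : R -> R) (Phi : ann) (x : nat -> R) : nat -> R :=
  match Phi with
  | [::] => x
  | [:: l] => affine l x
  | l :: Phi' => realize a Phi' (fun i => a (affine l x i))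
  end.

Definition realize1 (a : R -> R) (Phi : ann) (x : R) : R :=
  realize a Phi (fun _ => x) 0%N.

Definition affA (m n : nat) (W : nat -> nat -> R) (B : nat -> R) : ann :=
  [:: Layer m n W B].

Definition A1 (w b : R) : ann := affA 1 1 (fun _ _ => w) (fun _ => b).

Definition compose_raw (Phi1 Phi2 : ann) : ann :=
  let l2 := last dflt_layer Phi2 in
  let l1 := head dflt_layer Phi1 in
  take (size Phi2).-1 Phi2 ++
  Layer (lrows l1) (lcols l2)
        (fun i j => \sum_(t < lrows l2) lW l1 i t * lW l2 t j)
        (fun i => \sum_(t < lrows l2) lW l1 i t * lB l2 t + lB l1 i)
  :: behead Phi1.

Definition compose (Phi1 Phi2 : ann) : option ann :=
  if isANN Phi1 && isANN Phi2 && (inA Phi1 == outA Phi2)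
  then Some (compose_raw Phi1 Phi2) else None.

Definition scal (lam : R) (Phi : ann) : option ann :=
  compose (affA (outA Phi) (outA Phi) (fun i j => lam * (i == j)%:R)
                (fun _ => 0)) Phi.

Definition blockdiag2 (l1 l2 : layer) : layer :=
  let r1 := lrows l1 in let c1 := lcols l1 in
  Layer (r1 + lrows l2) (c1 + lcols l2)
        (fun i j => if (i < r1)%N then (if (j < c1)%N then lW l1 i j else 0)
                    else if (c1 <= j)%N then lW l2 (i - r1) (j - c1) else 0)
        (fun i => if (i < r1)%N then lB l1 i else lB l2 (i - r1)).

Definition diagL (ls : seq layer) : layer := foldr blockdiag2 dflt_layer ls.

Definition parallel (Phis : seq ann) : option ann :=
  let L := size (head [::] Phis) in
  if ~~ nilp Phis && all isANN Phis && all (fun Phi => size Phi == L) Phis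
  then Some (mkseq (fun k => diagL (map (fun Phi => nth dflt_layer Phi k) Phis)) L)
  else None.

(* \mathfrak S_{m,n} = A_{(I_m ... I_m), 0}  (m x mn) *)
Definition Ssum (m n : nat) : ann :=
  affA m (m * n) (fun i j => (i == (j %% m)%N)%:R) (fun _ => 0).
(* \mathfrak T_{m,n} = A_{(I_m ... I_m)^T, 0}  (mn x m) *)
Definition Tsum (m n : nat) : ann :=
  affA (m * n) m (fun i j => ((i %% m)%N == j)%:R) (fun _ => 0).

Definition bigsum (Phis : seq ann) : option ann :=
  match Phis with
  | [::] => None
  | Phi0 :: _ =>
    if all (fun Phi => (size Phi == size Phi0) && (inA Phi == inA Phi0)
                       && (outA Phi == outA Phi0)) Phis
    then obind (fun PT => compose (Ssum (outA Phi0) (size Phis)) PT)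
           (obind (fun P => compose P (Tsum (inA Phi0) (size Phis)))
                  (parallel Phis))
    else None
  end.

Definition Igam (gamma : nat) : ann :=
  [:: Layer 2 1 (fun i _ => if i == 0%N then 1 else -1) (fun _ => 0);
      Layer 1 2 (fun _ j => if j == 0%N then 1 else (-1) ^+ gamma) (fun _ => 0)].

Definition oseq (T : Type) (s : seq (option T)) : option (seq T) :=
  foldr (fun o acc => obind (fun x => omap (cons x) acc) o) (Some [::]) s.

(* Psi = A_{1,c_0} \bullet ( \bigoplus_{i=1}^gamma
           (c_i \circledast (I_gamma \bullet A_{1,b_i})) ) ;
   None iff some operation is applied outside its domain *)
Definition Psi (gamma : nat) (b c : nat -> R) : option ann :=
  obind (fun S => compose (A1 1 (c 0%N)) S)
    (obind bigsum
       (oseq [seq obind (scal (c i)) (compose (Igam gamma) (A1 1 (b i)))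
             | i <- iota 1 gamma])).

Definition coeffEq (gamma : nat) (b c : nat -> R) : Prop :=
  forall k : nat, (k <= gamma)%N ->
    (k == gamma)%:R * c 0%N + \sum_(1 <= i < gamma.+1) c i * b i ^+ k
    = (k == gamma.-1)%:R * (gamma%:R)^-1.

End ANN.

(* Since max(x,0)^g + (-1)^g max(-x,0)^g = x^g, the two-neuron network I_g
   realizes x |-> x^g, and Psi realizes x |-> c_0 + sum_i c_i (x + b_i)^g.
   By the binomial theorem the coefficient of x^(g-k) there is
   binom(g,k) sum_i c_i b_i^k (plus c_0 when k = g).  The equations for
   k < g form a Vandermonde system in c_1, ..., c_g, uniquely solvable since
   the b_i are distinct, and the equation for k = g then fixes c_0; they say
   precisely that all these coefficients vanish except that of x, which is
   binom(g,g-1) / g = 1. *)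
From HB Require Import structures.
From mathcomp Require Import all_boot all_order all_algebra.
From mathcomp Require Import all_classical all_reals all_analysis.
From mathcomp Require Import ring.
Import Order.TTheory GRing.Theory Num.Theory numFieldNormedType.Exports.
Local Open Scope ring_scope.

Lemma max0_expr_add (R : realDomainType) (g : nat) (x : R) : (0 < g)%N ->
  Num.max x 0 ^+ g + (-1) ^+ g * Num.max (- x) 0 ^+ g = x ^+ g.
Proof.
move=> g_gt0; have [x_ge0 | x_lt0] := leP 0 x.
- by rewrite max_r ?oppr_le0 // expr0n gtn_eqF // mulr0 addr0.
- by rewrite max_l ?oppr_ge0 ?ltW // expr0n gtn_eqF // add0r -exprMn mulN1r opprK.
Qed.

Lemma oseq_map_Some (T U : Type) (f : T -> option U) (g : T -> U) (s : seq T) :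
  (forall x, f x = Some (g x)) -> oseq (map f s) = Some (map g s).
Proof. by move=> fg; elim: s => //= x s IHs; rewrite fg /= IHs. Qed.

Lemma all_map_pred (T U : Type) (f : T -> U) (P : pred U) (s : seq T) :
  (forall x, P (f x)) -> all P (map f s).
Proof. by move=> Pf; elim: s => //= x s ->; rewrite Pf. Qed.

Section ReLUPowerNetworks.
Context {R : realType}.
Notation layer := (layer R).
Notation dfl := (dflt_layer R).

Lemma compose_Some (Phi1 Phi2 : ann R) :
  isANN Phi1 -> isANN Phi2 -> inA Phi1 = outA Phi2 ->
  compose Phi1 Phi2 = Some (compose_raw Phi1 Phi2).
Proof. by move=> N1 N2 io; rewrite /compose N1 N2 io eqxx. Qed.

Lemma realize1_Igam (a : R -> R) (g : nat) (x : R) :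
  realize1 a (Igam R g) x = a x + (-1) ^+ g * a (- x).
Proof.
rewrite /realize1 /= /affine /= !big_ord_recr !big_ord0 /=.
by rewrite !add0r !addr0 !mul1r mulN1r.
Qed.

Lemma lrows_diagL (f : nat -> layer) (k : nat) (s : seq nat) :
  (forall i, lrows (f i) = k) -> lrows (diagL (map f s)) = (k * size s)%N.
Proof. by move=> fk; elim: s => [|i s IHs] /=; rewrite ?muln0 // IHs fk mulnS. Qed.

Lemma lcols_diagL (f : nat -> layer) (k : nat) (s : seq nat) :
  (forall i, lcols (f i) = k) -> lcols (diagL (map f s)) = (k * size s)%N.
Proof. by move=> fk; elim: s => [|i s IHs] /=; rewrite ?muln0 // IHs fk mulnS. Qed.

Lemma lB_diagL0 (f : nat -> layer) (s : seq nat) :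
  (forall i t, lB (f i) t = 0) -> forall t, lB (diagL (map f s)) t = 0.
Proof. by move=> f0; elim: s => [|i s IHs] t //=; case: ifP. Qed.

Definition row_sum (l : layer) (i : nat) : R := \sum_(j < lcols l) lW l i j.
Definition col_sum (l : layer) (j : nat) : R := \sum_(i < lrows l) lW l i j.

Lemma row_sum_blockdiag2 (l1 l2 : layer) (i : nat) :
  row_sum (blockdiag2 l1 l2) i =
  if (i < lrows l1)%N then row_sum l1 i else row_sum l2 (i - lrows l1).
Proof.
rewrite /row_sum /= big_split_ord /=; case: ifP => _.
- rewrite [X in _ + X]big1 ?addr0 => [|j _]; last by rewrite ltnNge leq_addr.
  by apply: eq_bigr => j _; rewrite ltn_ord.
- rewrite big1 ?add0r => [|j _]; last by rewrite leqNgt ltn_ord.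
  by apply: eq_bigr => j _; rewrite leq_addr addKn.
Qed.

Lemma col_sum_blockdiag2 (l1 l2 : layer) (j : nat) :
  col_sum (blockdiag2 l1 l2) j =
  if (j < lcols l1)%N then col_sum l1 j else col_sum l2 (j - lcols l1).
Proof.
rewrite /col_sum /= big_split_ord /=; case: ifP => j_lt.
- rewrite [X in _ + X]big1 ?addr0 => [|i _]; last first.
    by rewrite ltnNge leq_addr /= leqNgt j_lt.
  by apply: eq_bigr => i _; rewrite ltn_ord.
- rewrite big1 ?add0r => [|i _]; last by rewrite ltn_ord.
  by apply: eq_bigr => i _; rewrite ltnNge leq_addr /= leqNgt j_lt addKn.
Qed.

(* A two-layer network with block-diagonal layers computes, neuron by neuron,
   the sum of what its diagonal blocks compute. *)
Lemma sum_diagL (f1 f2 : nat -> layer) (G : R -> R -> R -> R) (s : seq nat) :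
  (forall i, lcols (f2 i) = lrows (f1 i)) ->
  \sum_(j < lrows (diagL (map f1 s)))
     G (col_sum (diagL (map f2 s)) j) (row_sum (diagL (map f1 s)) j)
       (lB (diagL (map f1 s)) j)
  = \sum_(i <- s) \sum_(j < lrows (f1 i))
       G (col_sum (f2 i) j) (row_sum (f1 i) j) (lB (f1 i) j).
Proof.
move=> f21; elim: s => [|i s IHs]; first by rewrite big_nil big_ord0.
rewrite big_cons -IHs /= big_split_ord /=; congr (_ + _); apply: eq_bigr => j _.
  by rewrite row_sum_blockdiag2 col_sum_blockdiag2 f21 ltn_ord.
by rewrite row_sum_blockdiag2 col_sum_blockdiag2 f21 ltnNge leq_addr /= addKn.
Qed.

(* summand_net g b c i is c_i ⊛ (I_g • A_{1,b_i}); hidden_layer and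
   output_layer are the two layers of P_g of these summands. *)
Definition summand_net (g : nat) (b c : nat -> R) (i : nat) : ann R :=
  compose_raw (affA 1 1 (fun k l => c i * (k == l)%:R) (fun _ => 0))
              (compose_raw (Igam R g) (A1 1 (b i))).

Definition hidden_layer (g : nat) (b c : nat -> R) : layer :=
  diagL [seq nth dfl (summand_net g b c i) 0 | i <- iota 1 g].

Definition output_layer (g : nat) (b c : nat -> R) : layer :=
  diagL [seq nth dfl (summand_net g b c i) 1 | i <- iota 1 g].

Definition Psi_net (g : nat) (b c : nat -> R) : ann R :=
  compose_raw (A1 1 (c 0%N))
    (compose_raw (Ssum R 1 g)
       (compose_raw [:: hidden_layer g b c; output_layer g b c] (Tsum R 1 g))).

Lemma hidden_layer_dims (g : nat) (b c : nat -> R) :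
  lrows (hidden_layer g b c) = (2 * g)%N /\ lcols (hidden_layer g b c) = (1 * g)%N.
Proof. by rewrite /hidden_layer (@lrows_diagL _ 2%N) ?(@lcols_diagL _ 1%N) ?size_iota. Qed.

Lemma output_layer_dims (g : nat) (b c : nat -> R) :
  lrows (output_layer g b c) = (1 * g)%N /\ lcols (output_layer g b c) = (2 * g)%N.
Proof. by rewrite /output_layer (@lrows_diagL _ 1%N) ?(@lcols_diagL _ 2%N) ?size_iota. Qed.

Lemma Psi_Some (g : nat) (b c : nat -> R) : (0 < g)%N ->
  Psi g b c = Some (Psi_net g b c).
Proof.
case: g => // n _; rewrite /Psi (@oseq_map_Some _ _ _ (summand_net n.+1 b c)) //=.
rewrite all_map_pred // /parallel /= !all_map_pred // size_map size_iota /=.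
rewrite (_ : mkseq _ 2 = [:: hidden_layer n.+1 b c; output_layer n.+1 b c]);
  last by rewrite /mkseq; cbn -[summand_net]; rewrite -!map_comp.
have [r1 c1] := hidden_layer_dims n.+1 b c.
have [r2 c2] := output_layer_dims n.+1 b c.
rewrite /Psi_net.
move: (hidden_layer _ b c) (output_layer _ b c) r1 c1 r2 c2 => h o r1 c1 r2 c2.
rewrite compose_Some /=; last first.
- exact: c1.
- by [].
- by rewrite c1 r1 c2 r2 !eqxx !muln_gt0.
rewrite compose_Some /=; last first.
- by rewrite /inA /outA /= r2.
- by rewrite r1 c2 r2 !eqxx !muln_gt0.
- by [].
by rewrite compose_Some //= r1 c2 !eqxx !muln_gt0.
Qed.

Lemma isANN_Psi_net (g : nat) (b c : nat -> R) : (0 < g)%N -> isANN (Psi_net g b c).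
Proof.
have [r1 _] := hidden_layer_dims g b c; have [_ c2] := output_layer_dims g b c.
by move=> g_gt0; rewrite /isANN /= r1 c2 !eqxx muln_gt0 g_gt0.
Qed.

Lemma dimsA_Psi_net (g : nat) (b c : nat -> R) :
  dimsA (Psi_net g b c) = [:: 1; 2 * g; 1]%N.
Proof. by have [r1 _] := hidden_layer_dims g b c; rewrite /dimsA /inA /= r1. Qed.

Lemma realize1_Psi_net_sum (g : nat) (b c : nat -> R) (a : R -> R) (x : R) :
  realize1 a (Psi_net g b c) x =
  \sum_(j < lcols (output_layer g b c))
     col_sum (output_layer g b c) j *
       a (row_sum (hidden_layer g b c) j * x + lB (hidden_layer g b c) j)
  + c 0%N.
Proof.
have [_ c1] := hidden_layer_dims g b c.
have out_lB0 t : lB (output_layer g b c) t = 0.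
  by rewrite lB_diagL0 // => i k /=; rewrite big_ord1 mulr0 addr0.
rewrite /realize1 /Psi_net /= /affine /= !big_ord1 !mul1r addr0.
rewrite [X in _ + (X + _)]big1 ?add0r => [|t _]; last by rewrite out_lB0 mulr0.
congr (_ + _); apply: eq_bigr => j _.
rewrite !big_ord1 mul1r /col_sum /row_sum c1; congr (_ * a (_ + _)).
- by apply: eq_bigr => t _; rewrite modn1 mul1r.
- by congr (_ * x); apply: eq_bigr => t _; rewrite modn1 mulr1.
- by rewrite big1 ?add0r // => t _; rewrite mulr0.
Qed.

Lemma summand_net_sum (g : nat) (b c : nat -> R) (a : R -> R) (x : R) (i : nat) :
  let l1 := nth dfl (summand_net g b c i) 0 in
  let l2 := nth dfl (summand_net g b c i) 1 in
  \sum_(j < lrows l1) col_sum l2 j * a (row_sum l1 j * x + lB l1 j)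
  = c i * (a (x + b i) + (-1) ^+ g * a (- (x + b i))).
Proof.
rewrite /= /col_sum /row_sum /= !big_ord_recr !big_ord0 /= !add0r !addr0 !mulr1 !mul1r.
by rewrite !mulN1r opprD mulrDr mulrA.
Qed.

Lemma realize1_Psi_net (g : nat) (b c : nat -> R) (a : R -> R) (x : R) :
  (0 < g)%N -> (forall y, a y = Num.max y 0 ^+ g) ->
  realize1 a (Psi_net g b c) x = \sum_(i <- iota 1 g) c i * (x + b i) ^+ g + c 0%N.
Proof.
move=> g_gt0 aE; rewrite realize1_Psi_net_sum; congr (_ + _).
have [r1 _] := hidden_layer_dims g b c; have [_ c2] := output_layer_dims g b c.
rewrite c2 -r1 /hidden_layer /output_layer.
rewrite (@sum_diagL _ _ (fun w r l => w * a (r * x + l))) //.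
by apply: eq_bigr => i _; rewrite summand_net_sum !aE max0_expr_add.
Qed.

Section Coefficients.
Variables (n : nat) (b : nat -> R).
Hypothesis b_incr :
  forall i j : nat, (1 <= i)%N -> (i < j)%N -> (j <= n.+1)%N -> b i < b j.

(* The equations k < n+1 of coeffEq read V (c_1, ..., c_(n+1))^T = e_n / (n+1)
   for the Vandermonde matrix V of b_1, ..., b_(n+1); the last one gives c_0. *)
Definition nodes_vandermonde : 'M[R]_n.+1 := \matrix_(k, i) b i.+1 ^+ k.
Definition moment_rhs : 'cV[R]_n.+1 := \col_k ((k == n :> nat)%:R / n.+1%:R).
Definition moment_sol : 'cV[R]_n.+1 := invmx nodes_vandermonde *m moment_rhs.

Definition moment_coeff (i : nat) : R :=
  if i is i'.+1 then moment_sol (inord i') 0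
  else - \sum_(j < n.+1) moment_sol j 0 * b j.+1 ^+ n.+1.

Lemma nodes_vandermonde_unit : nodes_vandermonde \in unitmx.
Proof.
have -> : nodes_vandermonde = Vandermonde n.+1 (\row_i b i.+1).
  by apply/matrixP => i j; rewrite !mxE.
rewrite unitmxE unitfE det_Vandermonde; apply/prodf_neq0 => i _.
apply/prodf_neq0 => j ij; rewrite !mxE subr_eq0 gt_eqF //.
exact: b_incr (ltn_ord j).
Qed.

Lemma coeffEqE (c : nat -> R) : coeffEq n.+1 b c <->
  (forall k : 'I_n.+1, \sum_(i < n.+1) c i.+1 * b i.+1 ^+ k = moment_rhs k 0)
  /\ c 0%N + \sum_(i < n.+1) c i.+1 * b i.+1 ^+ n.+1 = 0.
Proof.
have shift F : \sum_(1 <= i < n.+2) F i = \sum_(i < n.+1) F i.+1 :> R.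
  by rewrite big_add1 /= big_mkord.
have nSn : (n.+1 == n) = false by rewrite gtn_eqF.
rewrite /coeffEq; split.
- move=> cE; split=> [k|].
  + have := cE k (ltnW (ltn_ord k)); rewrite shift /= ltn_eqF // mul0r add0r.
    by rewrite mxE.
  + by have := cE n.+1 (leqnn _); rewrite shift /= eqxx nSn mul1r mul0r.
- move=> [cE c0E] k; rewrite leq_eqVlt => /orP[/eqP -> | k_lt] /=.
  + by rewrite shift eqxx nSn mul1r c0E mul0r.
  + by rewrite shift ltn_eqF // mul0r add0r (cE (Ordinal k_lt)) mxE.
Qed.

Lemma coeffEq_moment_coeff : coeffEq n.+1 b moment_coeff.
Proof.
apply/coeffEqE; split; last first.
  rewrite /moment_coeff.
  by under [X in _ + X]eq_bigr => i _ do rewrite inord_val; rewrite addNr.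
move=> k; have := congr1 (fun M : 'cV[R]_n.+1 => M k 0)
  (mulKVmx nodes_vandermonde_unit moment_rhs).
rewrite !mxE => <-; apply: eq_bigr => i _.
by rewrite /moment_coeff inord_val !mxE mulrC.
Qed.

Lemma coeffEq_unique (c : nat -> R) :
  coeffEq n.+1 b c -> forall i, (i <= n.+1)%N -> c i = moment_coeff i.
Proof.
move=> /coeffEqE[cE c0E].
have solE (j : 'I_n.+1) : c j.+1 = moment_sol j 0.
  suff -> : moment_sol = \col_i c i.+1 by rewrite mxE.
  rewrite /moment_sol (_ : moment_rhs = nodes_vandermonde *m \col_i c i.+1).
    by rewrite mulKmx // nodes_vandermonde_unit.
  apply/matrixP => k z; rewrite (ord1 z) -cE !mxE.
  by apply: eq_bigr => i _; rewrite !mxE mulrC.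
case=> [_ | i i_lt] /=.
- apply/eqP; rewrite -subr_eq0 opprK -[X in _ == X]c0E; apply/eqP; congr (_ + _).
  by apply: eq_bigr => j _; rewrite solE.
- by rewrite /moment_coeff -solE inordK.
Qed.

End Coefficients.

Lemma coeffEq_binomial_sum (n : nat) (b c : nat -> R) (x : R) :
  coeffEq n.+1 b c -> \sum_(i <- iota 1 n.+1) c i * (x + b i) ^+ n.+1 + c 0%N = x.
Proof.
move=> cE.
have moment (k : 'I_n.+2) : \sum_(i <- iota 1 n.+1) c i * b i ^+ k =
    (k == n :> nat)%:R / n.+1%:R - (k == n.+1 :> nat)%:R * c 0%N.
  by rewrite -(cE k (leq_ord k)) /index_iota subSS subn0 addrAC subrr add0r.
have -> : \sum_(i <- iota 1 n.+1) c i * (x + b i) ^+ n.+1 =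
    \sum_(k < n.+2) (x ^+ (n.+1 - k) * 'C(n.+1, k)%:R) *
      \sum_(i <- iota 1 n.+1) c i * b i ^+ k.
  under eq_bigr => i _ do rewrite exprDn mulr_sumr.
  rewrite exchange_big /=; apply: eq_bigr => k _; rewrite mulr_sumr.
  by apply: eq_bigr => i _; rewrite -mulr_natr; ring.
under eq_bigr => k _ do rewrite moment.
rewrite 2!big_ord_recr big1 /= => [|k _]; last first.
  by rewrite !ltn_eqF ?mul0r ?subr0 ?mulr0 // ltnS ltnW.
rewrite (ltn_eqF (ltnSn n)) (gtn_eqF (ltnSn n)) !eqxx.
rewrite subnn subSnn binSn binn expr0 expr1.
have n1_neq0 : n.+1%:R != 0 :> R by rewrite pnatr_eq0.
by rewrite /= mulr1n mulr0n !mul0r subr0 !mul1r add0r sub0r subrK mulfK.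
Qed.

End ReLUPowerNetworks.

Theorem mainTheorem10 (R : realType) (gamma : nat) (b : nat -> R) (a : R -> R) :
  (2 <= gamma)%N ->
  (forall i j : nat, (1 <= i)%N -> (i < j)%N -> (j <= gamma)%N -> b i < b j) ->
  continuous a ->
  (forall x : R, a x = (Num.max x 0) ^+ gamma) ->
  (forall x : R, realize1 a (Igam R gamma) x = x ^+ gamma) /\
  exists c : nat -> R,
    coeffEq gamma b c /\
    (forall c' : nat -> R, coeffEq gamma b c' ->
       forall i : nat, (i <= gamma)%N -> c' i = c i) /\
    exists Psi0 : ann R,
      Psi gamma b c = Some Psi0 /\
      isANN Psi0 /\
      dimsA Psi0 = [:: 1; 2 * gamma; 1]%N /\
      continuous (realize1 a Psi0) /\
      (forall x : R, realize1 a Psi0 x = x).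
Proof.
case: gamma => [//|n] _ b_incr _ aE.
split=> [x|]; first by rewrite realize1_Igam !aE max0_expr_add.
pose c := moment_coeff n b.
have cE : coeffEq n.+1 b c := coeffEq_moment_coeff n b b_incr.
have PsiE : realize1 a (Psi_net n.+1 b c) = id.
  by apply: funext => x; rewrite realize1_Psi_net // coeffEq_binomial_sum.
exists c; split; first exact: cE.
split; first exact: coeffEq_unique n b b_incr.
exists (Psi_net n.+1 b c); rewrite Psi_Some // isANN_Psi_net // dimsA_Psi_net PsiE.
by do 4!split=> //; move=> x; apply: cvg_id.
Qed.
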